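(* Let $\mu,P$ be Borel probability measures on $\mathbb{R}^d$ absolutely continuous w.r.t. Lebesgue measure, let $u\in\mathbb{R}^d$, let $v_u\in\arg\min_{v\in\mathcal{S}^{d-1}}\mu(\{y:\langle y-u,v\rangle\geq0\})$, and for $k\in\mathbb{N}$ let $Q_k$ be the uniform (Lebesgue) distribution on the ball $kv_u+\mathbb{B}$. Then for every $\varepsilon\in(0,1)$ with $\varepsilon>\mathrm{TD}(u;\mu)>0$, if for each $k$, $\partial\varphi_{\varepsilon,k}$ is the subdifferential of any lower semicontinuous convex function $\varphi_{\varepsilon,k}$ whose gradient pushes $\mu$ forward to $P+\varepsilon(Q_k-P)$, then $$\inf_{y\in\partial\varphi_{\varepsilon,k}(u)}\|y\|\to+\infty\quad\text{as }k\to\infty.$$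
   Context: $\mathbb{B}=\{x:\|x\|\leq1\}$; $\mathrm{TD}(u;\mu)=\min_{v\in\mathcal{S}^{d-1}}\mu(\{z:\langle v,z-u\rangle\geq0\})$; $\partial\psi(u)=\{x:\psi(z)\geq\psi(u)+\langle x,z-u\rangle\ \forall z\}$. *)

From HB Require Import structures.
From mathcomp Require Import all_boot all_order all_algebra.
From mathcomp Require Import all_classical all_reals all_analysis.
Set Implicit Arguments. Unset Strict Implicit. Unset Printing Implicit Defensive.
Import Order.TTheory GRing.Theory Num.Theory.
Import numFieldNormedType.Exports.
Local Open Scope classical_set_scope.
Local Open Scope ring_scope.

Definition dotv (R : realType) (d : nat) (x y : 'rV[R]_d) : R :=
  \sum_(i < d) x 0 i * y 0 i.
Definition enorm (R : realType) (d : nat) (x : 'rV[R]_d) : R :=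
  Num.sqrt (dotv x x).

Definition sphere (R : realType) (d : nat) : set 'rV[R]_d :=
  [set v | enorm v = 1].
Definition cball (R : realType) (d : nat) (c : 'rV[R]_d) (r : R) : set 'rV[R]_d :=
  [set x | enorm (x - c) <= r].

(* Borel sigma-algebra on R^d: generated by the open sets (the topology of
   'rV[R]_d is the product/Euclidean topology). *)
Definition Borel (R : realType) (d : nat) :=
  g_sigma_algebraType (@open 'rV[R]_d).

Definition box (R : realType) (d : nat) (a b : 'rV[R]_d) : set 'rV[R]_d :=
  [set x | forall i, a 0 i <= x 0 i <= b 0 i].
Definition boxvol (R : realType) (d : nat) (a b : 'rV[R]_d) : R :=
  \prod_(i < d) Num.max 0 (b 0 i - a 0 i).
Definition lebesgue_outer (R : realType) (d : nat) (A : set 'rV[R]_d) : \bar R :=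
  ereal_inf [set s : \bar R | exists a b : nat -> 'rV[R]_d,
    A `<=` \bigcup_n box (a n) (b n) /\
    s = (\sum_(0 <= n <oo) (boxvol (a n) (b n))%:E)%E].

Definition unit_ball_vol (R : realType) (d : nat) : R :=
  fine (lebesgue_outer (cball (0 : 'rV[R]_d) 1)).

Definition unif_ball (R : realType) (d : nat) (c : 'rV[R]_d) (A : set 'rV[R]_d)
  : \bar R :=
  (lebesgue_outer (A `&` cball c 1) * (@unit_ball_vol R d)^-1%:E)%E.

Definition abs_cont_leb (R : realType) (d : nat)
  (mu : probability (Borel R d) R) : Prop :=
  forall A : set (Borel R d), measurable A ->
    lebesgue_outer (A : set 'rV[R]_d) = 0%E -> mu A = 0%E.

Definition halfspace (R : realType) (d : nat) (u v : 'rV[R]_d) : set 'rV[R]_d :=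
  [set z | 0 <= dotv v (z - u)].

Definition tukey_depth (R : realType) (d : nat) (u : 'rV[R]_d)
  (mu : probability (Borel R d) R) : \bar R :=
  ereal_inf [set mu (halfspace u v : set (Borel R d)) | v in @sphere R d].

Definition convex_fun (R : realType) (d : nat) (phi : 'rV[R]_d -> \bar R) : Prop :=
  (forall x, phi x != -oo%E) /\
  forall (x y : 'rV[R]_d) (t : R), 0 < t < 1 ->
    (phi (t *: x + (1 - t) *: y)%R <= t%:E * phi x + (1 - t)%:E * phi y)%E.
Definition lsc_fun (R : realType) (d : nat) (phi : 'rV[R]_d -> \bar R) : Prop :=
  forall a : R, open [set x | (a%:E < phi x)%E].

Definition subdiff (R : realType) (d : nat) (phi : 'rV[R]_d -> \bar R)
  (u : 'rV[R]_d) : set 'rV[R]_d :=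
  [set x | forall z, (phi u + (dotv x (z - u))%:E <= phi z)%E].

Definition has_gradient (R : realType) (d : nat) (phi : 'rV[R]_d -> \bar R)
  (x g : 'rV[R]_d) : Prop :=
  forall e : R, 0 < e -> exists2 delta : R, 0 < delta &
    forall h : 'rV[R]_d, enorm h < delta ->
      phi (x + h) \is a fin_num /\
      `| fine (phi (x + h)) - fine (phi x) - dotv g h | <= e * enorm h.

(* the gradient of phi pushes mu forward to the Borel set function nu:
   there is a Borel map T equal to grad phi mu-a.e. with T#mu = nu *)
Definition grad_pushforward (R : realType) (d : nat) (phi : 'rV[R]_d -> \bar R)
  (mu : probability (Borel R d) R) (nu : set 'rV[R]_d -> \bar R) : Prop :=
  exists T : Borel R d -> Borel R d,
    measurable_fun setT T /\
    {ae mu, forall x : Borel R d, has_gradient phi x (T x)} /\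
    forall A : set (Borel R d), measurable A ->
      mu (T @^-1` A) = nu A.

From HB Require Import structures.
From mathcomp Require Import all_boot all_order all_algebra.
From mathcomp Require Import all_classical all_reals all_analysis.
From mathcomp Require Import lra.
Import Order.TTheory GRing.Theory Num.Theory.
Import numFieldNormedType.Exports.
Local Open Scope classical_set_scope.
Local Open Scope ring_scope.

(* If the minimal subgradient norms at u stayed below some A along a
   subsequence k_j, pick y_j in the subdifferential of phi_{k_j} at u with
   |y_j| <= A.  The target measure gives the ball k v_u + B mass at least eps,
   so the set G_k of points whose gradient lies in that ball has mu-mass at
   least eps, and so does lim sup G_{k_j}.  At a point x of that lim sup,
   the gradient g_j of phi_{k_j} is a subgradient there (convexity), and
   monotonicity of the subdifferential gives <y_j, x - u> <= <g_j, x - u> with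
   g_j within 1 of k_j v_u, which forces <v_u, x - u> >= 0 as k_j grows.
   Hence eps <= mu(halfspace u v_u) = TD(u; mu) < eps. *)

Definition l1norm {R : realType} {d : nat} (z : 'rV[R]_d) : R :=
  \sum_(i < d) `|z 0 i|.

Section euclidean.
Context {R : realType} {d : nat}.
Implicit Types (a b z : 'rV[R]_d).

Lemma dotvDl a b z : dotv (a + b) z = dotv a z + dotv b z.
Proof. by rewrite /dotv -big_split; apply: eq_bigr => i _; rewrite mxE mulrDl. Qed.

Lemma dotvZl (r : R) a z : dotv (r *: a) z = r * dotv a z.
Proof. by rewrite /dotv mulr_sumr; apply: eq_bigr => i _; rewrite mxE mulrA. Qed.

Lemma dotvZr (r : R) a z : dotv a (r *: z) = r * dotv a z.
Proof. by rewrite /dotv mulr_sumr; apply: eq_bigr => i _; rewrite mxE mulrCA. Qed.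

Lemma dotvNl a z : dotv (- a) z = - dotv a z.
Proof. by rewrite -scaleN1r dotvZl mulN1r. Qed.

Lemma dotvNr a z : dotv a (- z) = - dotv a z.
Proof. by rewrite -scaleN1r dotvZr mulN1r. Qed.

Lemma dotvv_ge0 a : 0 <= dotv a a.
Proof. by apply: sumr_ge0 => i _; exact: sqr_ge0. Qed.

Lemma enorm_ge0 a : 0 <= enorm a.
Proof. exact: sqrtr_ge0. Qed.

Lemma enormZ (r : R) a : enorm (r *: a) = `|r| * enorm a.
Proof. by rewrite /enorm dotvZl dotvZr mulrA -expr2 sqrtrM ?sqrtr_sqr ?sqr_ge0. Qed.

Lemma enorm0 : enorm (0 : 'rV[R]_d) = 0.
Proof. by rewrite -(scale0r (0 : 'rV[R]_d)) enormZ normr0 mul0r. Qed.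

Lemma normr_coord_le_enorm a i : `|a 0 i| <= enorm a.
Proof.
rewrite -sqrtr_sqr /enorm ler_sqrt ?dotvv_ge0 // /dotv (bigD1 i) //= -expr2.
by rewrite lerDl; apply: sumr_ge0 => j _; rewrite -expr2 sqr_ge0.
Qed.

Lemma l1norm_ge0 z : 0 <= l1norm z.
Proof. exact: sumr_ge0. Qed.

Lemma normr_dotv_le a z : `|dotv a z| <= enorm a * l1norm z.
Proof.
rewrite /dotv /l1norm mulr_sumr; apply: (le_trans (ler_norm_sum _ _ _)).
by apply: ler_sum => i _; rewrite normrM ler_wpM2r ?normr_coord_le_enorm.
Qed.

Lemma dotv_continuous a : continuous (dotv a).
Proof.
apply: continuous_big => [|i _]; first exact: add_continuous.
move=> z; apply: (@continuousM _ _ (fun=> a 0 i) (fun z => z 0 i)).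
  exact: cst_continuous.
exact: coord_continuous.
Qed.

Lemma enorm_continuous : continuous (@enorm R d).
Proof.
move=> z; apply: continuous_comp; last exact: sqrt_continuous.
apply: continuous_big => [|i _]; first exact: add_continuous.
by move=> x; apply: continuousM; exact: coord_continuous.
Qed.

Lemma closed_Borel (A : set 'rV[R]_d) : closed A -> measurable (A : set (Borel R d)).
Proof.
move=> cA; rewrite -[A]setCK; apply: sigma_algebraC; apply: sub_sigma_algebra.
by rewrite openC.
Qed.

Lemma halfspace_Borel (u v : 'rV[R]_d) : measurable (halfspace u v : set (Borel R d)).
Proof.
apply: closed_Borel; have shift_cont : continuous (fun z => dotv v (z - u)).
  move=> z; apply: continuous_comp; last exact: dotv_continuous.
  by apply: continuousB; [exact: cvg_id | exact: cst_continuous].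
exact: (continuous_closedP _).1 shift_cont _ (@closed_ge R 0).
Qed.

Lemma cball_Borel (c : 'rV[R]_d) (r : R) : measurable (cball c r : set (Borel R d)).
Proof.
apply: closed_Borel; have shift_cont : continuous (fun z => enorm (z - c)).
  move=> z; apply: continuous_comp; last exact: enorm_continuous.
  by apply: continuousB; [exact: cvg_id | exact: cst_continuous].
exact: (continuous_closedP _).1 shift_cont _ (@closed_le R r).
Qed.
End euclidean.

Section convex_gradient.
Context {R : realType} {d : nat} {phi : 'rV[R]_d -> \bar R}.
Implicit Types (x z g y : 'rV[R]_d).

Lemma has_gradient_fin_num [x g] : has_gradient phi x g -> phi x \is a fin_num.
Proof.
move=> /(_ 1 ltr01) [del del0 /(_ 0)].
by rewrite enorm0 addr0 => /(_ del0) [].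
Qed.

Lemma convex_gradient_slope [x g z e] :
  convex_fun phi -> has_gradient phi x g -> 0 < e -> phi z \is a fin_num ->
  dotv g (z - x) <= fine (phi z) - fine (phi x) + e * enorm (z - x).
Proof.
move=> [_ cvx] hg e0 phiz; have phix := has_gradient_fin_num hg.
have [del del0 near_x] := hg e e0.
set n := enorm (z - x); have n0 : 0 <= n by exact: enorm_ge0.
pose t := Num.min (2^-1) (del / (2 * (n + 1))).
have t0 : 0 < t by rewrite lt_min invr_gt0 ltr0n divr_gt0 // mulr_gt0 // ltr_wpDl.
have t1 : t < 1 by rewrite gt_min invf_lt1 ?ltr1n.
have tn : t * n < del.
  apply: (@le_lt_trans _ _ (del / (2 * (n + 1)) * n)).
    by rewrite ler_wpM2r // ge_min lexx orbT.
  by rewrite mulrAC ltr_pdivrMr ?mulr_gt0 ?ltr_wpDl // ltr_pM2l //; nra.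
set h := t *: (z - x).
have hn : enorm h = t * n by rewrite enormZ gtr0_norm.
have [phixh taylor] := near_x h ltac:(by rewrite hn).
have segment : t *: z + (1 - t) *: x = x + h.
  by rewrite /h; apply/rowP => i; rewrite !mxE; lra.
have := cvx z x t; rewrite t0 t1 segment => /(_ isT).
rewrite -(fineK phixh) -(fineK phiz) -(fineK phix) -!EFinM -EFinD lee_fin => chord.
move: taylor; rewrite /h dotvZr hn => /ler_normlP [taylor _].
have : t * (dotv g (z - x) - e * n - (fine (phi z) - fine (phi x))) <= 0 by lra.
by rewrite pmulr_rle0 //; lra.
Qed.

Lemma convex_gradient_subdiff [x g] :
  convex_fun phi -> has_gradient phi x g -> subdiff phi x g.
Proof.
move=> cvx hg z; have phix := has_gradient_fin_num hg.
case Ez: (phi z) => [r| |]; [|exact: leey|by have := cvx.1 z; rewrite Ez].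
rewrite -(fineK phix) -EFinD lee_fin; apply/ler_addgt0Pr => e e0.
set n := enorm (z - x); have n0 : 0 <= n by exact: enorm_ge0.
have slope := convex_gradient_slope (z := z) cvx hg
  (divr_gt0 e0 (ltr_wpDl n0 ltr01)).
rewrite Ez /= -/n in slope; move/(_ isT) in slope.
have : e / (n + 1) * n <= e by rewrite mulrAC ler_pdivrMr ?ltr_wpDl //; nra.
lra.
Qed.

Lemma subdiff_monotone [x u g y] : phi x \is a fin_num ->
  subdiff phi x g -> subdiff phi u y -> dotv y (x - u) <= dotv g (x - u).
Proof.
move=> phix /(_ u) gx /(_ x) yu.
have phiu : phi u \is a fin_num.
  rewrite fin_numE; apply/andP; split; apply/eqP => pu.
    by move: gx; rewrite pu -(fineK phix) -EFinD leeNy_eq.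
  by move: yu; rewrite pu addye // leye_eq -(fineK phix).
move: gx yu; rewrite -(fineK phix) -(fineK phiu) -!EFinD !lee_fin.
rewrite -(opprB x u) dotvNr; lra.
Qed.

End convex_gradient.

Lemma lim_sup_set_ge {d} {T : measurableType d} {R : realType}
    [mu : {measure set T -> \bar R}] [F : (set T)^nat] [a : \bar R] :
  (forall k, measurable (F k)) -> (mu (\bigcup_(k >= 0) F k) < +oo)%E ->
  (forall k, a <= mu (F k))%E -> (a <= mu (lim_sup_set F))%E.
Proof.
move=> mF Ffin aF; have cvgF := lim_sup_set_cvg mu F mF Ffin.
rewrite -(cvg_lim _ cvgF) //; apply: lime_ge.
  by apply/cvg_ex; exists (mu (lim_sup_set F)).
apply: nearW => n; apply: (le_trans (aF n)); rewrite le_measure ?inE //.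
- by apply: bigcup_measurable => k _; exact: mF.
- by apply: bigcup_sup => /=.
Qed.

Lemma mixture_pushforward_ge {d d'} {T : measurableType d} {T' : measurableType d'}
    {R : realType} [mu : probability T R] [P : probability T' R]
    [Q : set T' -> \bar R] [eps : R] [F : T -> T'] [B : set T'] :
  0 < eps <= 1 ->
  (forall A, measurable A -> mu (F @^-1` A) = P A + eps%:E * (Q A - P A))%E ->
  measurable B -> Q B = Q setT -> (eps%:E <= mu (F @^-1` B))%E.
Proof.
move=> /andP[eps0 eps1] push mB QB.
(* Mass conservation forces Q to have total mass 1, so the normalising volume
   of the unit ball never has to be computed. *)
have Q1 : Q setT = 1%E.
  move: (push setT measurableT); rewrite preimage_setT !probability_setT.
  case: (Q setT) => [r| |] /=.
  - rewrite -EFinB -EFinM -EFinD => /eqP; rewrite eqe => /eqP mass.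
    have : eps * (r - 1) = 0 by lra.
    by move/eqP; rewrite mulf_eq0 gt_eqF //= subr_eq0 => /eqP ->.
  - by rewrite addye // mulry gtr0_sg // mul1e addey.
  - by rewrite addNye // mulrNy gtr0_sg // mul1e addeNy.
have PB_fin : P B \is a fin_num.
  by rewrite fin_num_measure // (le_lt_trans (probability_le1 _ mB)) ?ltry.
have PBp : P B = (fine (P B))%:E by rewrite fineK.
have PB0 : 0 <= fine (P B) by rewrite fine_ge0.
have PB1 : fine (P B) <= 1 by rewrite -lee_fin -PBp probability_le1.
rewrite push // QB Q1 PBp -EFinB -EFinM -EFinD lee_fin.
have : 0 <= (1 - eps) * fine (P B) by rewrite mulr_ge0 // subr_ge0.
lra.
Qed.

Section escaping_gradients.
Context {R : realType} {d : nat}.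

Lemma dotv_le_near_scaled [k A : R] [v y g z : 'rV[R]_d] :
  enorm (g - k *: v) <= 1 -> enorm y <= A -> dotv y z <= dotv g z ->
  k * - dotv v z <= (A + 1) * l1norm z.
Proof.
move=> gk yA yg; have l0 := l1norm_ge0 z.
have /ler_normlP[_ gz] := normr_dotv_le (g - k *: v) z.
have /ler_normlP[yz _] := normr_dotv_le y z.
have : enorm (g - k *: v) * l1norm z <= l1norm z by rewrite ler_piMl.
have : enorm y * l1norm z <= A * l1norm z by rewrite ler_wpM2r.
rewrite dotvDl dotvNl dotvZl in gz; lra.
Qed.

Lemma halfspace_of_escaping_balls (A : R) (u v x : 'rV[R]_d) :
  (forall n, exists2 k, (n <= k)%N & exists y g, [/\ enorm (g - k%:R *: v) <= 1,
     enorm y <= A & dotv y (x - u) <= dotv g (x - u)]) ->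
  halfspace u v x.
Proof.
move=> escaping; rewrite /halfspace /= leNgt; apply/negP => s_neg.
set s := dotv v (x - u) in s_neg; set c := (A + 1) * l1norm (x - u).
have ms_gt0 : 0 < - s by rewrite oppr_gt0.
pose n := (Num.truncn (c / - s)).+1.
have [k nk [y [g [gk yA yg]]]] := escaping n.
have := dotv_le_near_scaled gk yA yg; rewrite -/s -/c => bound.
have : c < n%:R * - s by rewrite -ltr_pdivrMr // truncnS_gt.
have : n%:R * - s <= k%:R * - s by rewrite ler_wpM2r ?ler_nat ?ltW.
lra.
Qed.
End escaping_gradients.

Section transport_to_escaping_ball.
Context {R : realType} {d : nat}.
Context {mu P : probability (Borel R d) R} {u v : 'rV[R]_d} {eps : R}.
Context {phi : nat -> 'rV[R]_d -> \bar R}.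
Hypothesis eps01 : 0 < eps <= 1.
Hypothesis phi_convex : forall k, convex_fun (phi k).
Hypothesis phi_push : forall k, grad_pushforward (phi k) mu
  (fun A => P A + eps%:E * (unif_ball (k%:R *: v) A - P A))%E.

Lemma gradient_in_ball_mass k : exists G : set (Borel R d),
  [/\ measurable G, (eps%:E <= mu G)%E &
      forall x, G x -> exists2 g, has_gradient (phi k) x g & enorm (g - k%:R *: v) <= 1].
Proof.
have [T [mT [[N [mN N0 gradN]] push]]] := phi_push k.
set B : set (Borel R d) := cball (k%:R *: v) 1.
have mB : measurable B := cball_Borel _ _.
have mTB : measurable (T @^-1` B) by rewrite -[X in measurable X]setTI; exact: mT.
exists (T @^-1` B `\` N); split.
- exact: measurableD.
- have QB : unif_ball (k%:R *: v) B = unif_ball (k%:R *: v) setT.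
    by rewrite /unif_ball setIid setTI.
  apply: (le_trans (mixture_pushforward_ge eps01 push mB QB)).
  rewrite -(measureU0 (measurableD mTB mN) mN N0) le_measure ?inE //.
  + by apply: measurableU => //; exact: measurableD.
  + by move=> x Bx; have [Nx|nNx] := pselect (N x); [right|left].
- move=> x [Bx nNx]; exists (T x) => //.
  by apply: contrapT => ngrad; exact/nNx/gradN.
Qed.

Lemma halfspace_mass_ge [A : R] :
  (forall n, exists k, (n <= k)%N /\ exists2 y, subdiff (phi k) u y & enorm y <= A) ->
  (eps%:E <= mu (halfspace u v : set (Borel R d)))%E.
Proof.
move=> /choice[kf kf_ge].
have [G G_ok] := choice (fun j => gradient_in_ball_mass (kf j)).
have mG j : measurable (G j) by case: (G_ok j).
have G_mass j : (eps%:E <= mu (G j))%E by case: (G_ok j).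
have mlimG : measurable (lim_sup_set G).
  by apply: bigcap_measurable => // n _; apply: bigcup_measurable => j _; exact: mG.
apply: (le_trans (lim_sup_set_ge mG _ G_mass)).
  apply: le_lt_trans (probability_le1 _ _) (ltry _).
  by apply: bigcup_measurable => j _; exact: mG.
rewrite le_measure ?inE //; first exact: halfspace_Borel.
move=> x limGx; apply: (@halfspace_of_escaping_balls _ _ A) => n.
have [j /= nj Gjx] := limGx n I.
have [_ _ /(_ x Gjx) [g grad_g g_ball]] := G_ok j.
have [kj [y sub_y yA]] := kf_ge j.
exists (kf j); first exact: leq_trans nj kj.
exists y, g; split => //.
apply: (subdiff_monotone (has_gradient_fin_num grad_g) _ sub_y).
exact: convex_gradient_subdiff (phi_convex _) grad_g.
Qed.

End transport_to_escaping_ball.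

Theorem mainTheorem7 (R : realType) (d : nat)
  (mu P : probability (Borel R d) R)
  (hmu : abs_cont_leb mu) (hP : abs_cont_leb P)
  (u vu : 'rV[R]_d)
  (hvu_sphere : @sphere R d vu)
  (hvu_argmin : mu (halfspace u vu : set (Borel R d)) = tukey_depth u mu)
  (eps : R) (heps : 0 < eps < 1)
  (hTD : (0 < tukey_depth u mu < eps%:E)%E)
  (phi : nat -> 'rV[R]_d -> \bar R)
  (hphi : forall k : nat,
     convex_fun (phi k) /\ lsc_fun (phi k) /\
     grad_pushforward (phi k) mu
       (fun A : set 'rV[R]_d =>
          (P (A : set (Borel R d))
           + eps%:E * (unif_ball (k%:R *: vu) A - P (A : set (Borel R d))))%E)) :
  (fun k : nat => ereal_inf [set (enorm y)%:E | y in subdiff (phi k) u])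
    @ \oo --> +oo%E.
Proof.
apply/cvgeyPge => A; apply: contrapT => not_eventually.
have bounded n : exists k, (n <= k)%N /\ exists2 y, subdiff (phi k) u y & enorm y <= A.
  apply: contrapT => none; apply: not_eventually; exists n => // k /= nk.
  rewrite leNgt; apply/negP => /ereal_inf_lt[_ [y sub_y <-]]; rewrite lte_fin => yA.
  by apply: none; exists k; split => //; exists y => //; exact: ltW.
have eps01 : 0 < eps <= 1 by case/andP: heps => eps0 /ltW ->; rewrite eps0.
have := halfspace_mass_ge eps01 (fun k => (hphi k).1) (fun k => (hphi k).2.2) bounded.
rewrite hvu_argmin => eps_le_depth.
by case/andP: hTD => _ /(le_lt_trans eps_le_depth); rewrite ltxx.
Qed.
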